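(* Let $\phi:\mathbb{N}_0\to\mathbb{N}_0$ satisfy $\phi(0)=0$ and $\phi(x)\neq x$ for all $x\in\mathbb{N}$, let $k,n\ge1$, and assume the local function $\phi_n$ has no cycle. Let $J_{n,k}(\phi)=\{x\in D_n:\phi_n^k(x)\in D_n\}$. Then $|J_{n,k}(\phi)|\le\max(n-k,0)$. In particular, $|J_{n,1}(\phi)|=n-|\widetilde{D}_n|$.
   Context: $\mathbb{N}=\{1,2,\dots\}$, $\mathbb{N}_0=\mathbb{N}\cup\{0\}$, $D_n=\{1,\dots,n\}$, $D_{n,0}=D_n\cup\{0\}$. The local function $\phi_n:D_{n,0}\to D_{n,0}$ is $\phi_n(x)=\phi(x)$ if $x\in D_n$ and $\phi(x)\in D_n$, and $\phi_n(x)=0$ otherwise. ''$\phi_n$ has no cycle'' means there are no $m\ge2$ and $x\in D_n$ with $\phi_n^m(x)=x$. The height of $x\in D_n$ is $h(x)=\min\{k\in\mathbb{N}:\phi_n^k(x)=0\}$, and the orbit of $x$ is $\Omega(x)=\{\phi_n^j(x):0\le j<h(x)\}$. $\widetilde{D}_n$ denotes the set of equivalence classes of $D_n$ under the equivalence relation $x\sim y\iff\Omega(x)\cap\Omega(y)\neq\emptyset$. *)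

From mathcomp Require Import all_boot all_order.
Unset Printing Implicit Defensive.

(* phi : N_0 -> N_0 is modelled as phi : nat -> nat. D_{n,0} = {0..n} is 'I_n.+1 *)

Definition phin (phi : nat -> nat) (n : nat) (x : nat) : nat :=
  if (0 < x <= n) && (0 < phi x <= n) then phi x else 0.

Definition no_cycle (phi : nat -> nat) (n : nat) : Prop :=
  forall (m x : nat), 2 <= m -> 0 < x <= n -> iter m (phin phi n) x <> x.

Definition Dn (n : nat) : {set 'I_n.+1} := [set x : 'I_n.+1 | 0 < x].

Definition Jset (phi : nat -> nat) (n k : nat) : {set 'I_n.+1} :=
  [set x : 'I_n.+1 | (0 < x <= n) && (0 < iter k (phin phi n) x <= n)].

(* Orbit Omega(x) = {phi_n^j(x) : 0 <= j < h(x)}, i.e. the iterates phi_n^j(x)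
   such that phi_n^i(x) <> 0 for all i <= j.  Indices j are ranged over 0..n;
   this loses nothing. *)
Definition Omega (phi : nat -> nat) (n : nat) (x : nat) : {set 'I_n.+1} :=
  [set y : 'I_n.+1 | [exists j : 'I_n.+1,
      (iter j (phin phi n) x == y) &&
      [forall i : 'I_j.+1, iter i (phin phi n) x != 0]]].

Definition orbit_rel (phi : nat -> nat) (n : nat) : rel 'I_n.+1 :=
  fun x y => ~~ [disjoint Omega phi n x & Omega phi n y].

Definition Dtilde (phi : nat -> nat) (n : nat) : {set {set 'I_n.+1}} :=
  equivalence_partition (orbit_rel phi n) (Dn n).

From mathcomp Require Import all_boot all_order.

(* Since phi_n has neither cycles nor fixed points, every orbit in D_n dies
   (reaches 0) within n steps, so it has a last point r, where phi_n r = 0,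
   i.e. r has height 1.  Two orbits meet iff they end at the same point, so the
   elements of height 1 form a transversal of the classes of D_n; these
   elements are exactly D_n minus J_{n,1}.  For the bound, J_{n,k+1} is
   contained in J_{n,k}, strictly when it is nonempty: following the orbit of
   an element of J_{n,k+1} one meets a point of height exactly k+1. *)

Definition acyclic_on (f : nat -> nat) (n : nat) : Prop :=
  forall m x, 0 < m -> 0 < x <= n -> iter m f x <> x.

Definition orbit_end (f : nat -> nat) (x r : nat) : Prop :=
  [/\ 0 < r, f r = 0 & exists j, iter j f x = r].

Section Iterates.

Context {f : nat -> nat} (f0 : f 0 = 0).

Lemma iter_fix0 j : iter j f 0 = 0.
Proof. by elim: j => //= j ->. Qed.

Lemma iter_eq0_le {i j x} : i <= j -> iter i f x = 0 -> iter j f x = 0.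
Proof. by move=> le_ij fix0; rewrite -(subnK le_ij) iterD fix0 iter_fix0. Qed.

Lemma orbit_end_iter j {x r} : orbit_end f (iter j f x) r -> orbit_end f x r.
Proof. by case=> r_gt0 fr [i ri]; split=> //; exists (i + j); rewrite iterD. Qed.

Lemma orbit_end_self {r} : 0 < r -> f r = 0 -> orbit_end f r r.
Proof. by split=> //; exists 0. Qed.

Lemma orbit_end_uniq {x r r'} : orbit_end f x r -> orbit_end f x r' -> r = r'.
Proof.
have dies i j : i < j -> f (iter i f x) = 0 -> iter j f x = 0.
  by move=> lt_ij fi0; apply: (iter_eq0_le lt_ij); rewrite iterS.
case=> r_gt0 fr [i ri] [r'_gt0 fr' [j rj]].
rewrite -ri -rj in r_gt0 r'_gt0 fr fr' *.
case: (ltngtP i j) => [lt_ij|lt_ji|-> //].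
- by move: r'_gt0; rewrite (dies _ _ lt_ij fr).
- by move: r_gt0; rewrite (dies _ _ lt_ji fr').
Qed.

Context {n : nat} (f_le : forall x, f x <= n) (f_acyclic : acyclic_on f n).

Lemma iter_le {j x} : x <= n -> iter j f x <= n.
Proof. by case: j => //= j _; apply: f_le. Qed.

Lemma orbit_end_le {x r} : x <= n -> orbit_end f x r -> r <= n.
Proof. by move=> le_xn [_ _ [j <-]]; apply: iter_le. Qed.

Lemma iter_n_eq0 {x} : x <= n -> iter n f x = 0.
Proof.
move=> le_xn; apply/eqP/negPn/negP => alive.
have iter_gt0 (i : 'I_n.+1) : 0 < iter i f x.
  rewrite lt0n; apply: contra alive => /eqP fi0.
  by rewrite (iter_eq0_le (ltnSE (ltn_ord i)) fi0).
(* Otherwise the iterates f^0 x, ..., f^n x would be n+1 distinct points of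
   {1, ..., n}. *)
pose g (i : 'I_n.+1) : 'I_n.+1 := inord (iter i f x).
have g_inj : injective g.
  have no_repeat (i j : 'I_n.+1) : i < j -> iter i f x <> iter j f x.
    move=> lt_ij eq_ij.
    apply: (f_acyclic (j - i) (iter i f x)); rewrite ?subn_gt0 //.
      by rewrite iter_gt0 iter_le.
    by rewrite -iterD subnK 1?ltnW.
  move=> i j /(congr1 (@nat_of_ord _)).
  rewrite /g !inordK ?ltnS ?iter_le // => eq_ij.
  case: (ltngtP i j) => [/no_repeat/(_ eq_ij) | /no_repeat/(_ (esym eq_ij)) |] //.
  exact: val_inj.
have : g @: setT \subset [set~ ord0].
  by apply/subsetP=> _ /imsetP[i _ ->]; rewrite !inE -val_eqE /g /= inordK
    ?ltnS ?iter_le // -lt0n iter_gt0.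
by move/subset_leq_card; rewrite card_imset // cardsC1 cardsT card_ord ltnn.
Qed.

Lemma last_nonzero_iter k {x} : x <= n -> iter k f x != 0 ->
  exists j, [/\ k <= j, iter j f x != 0 & iter j.+1 f x = 0].
Proof.
move=> le_xn fk_nz.
have ex : exists j, (k <= j) && (iter j.+1 f x == 0).
  exists (maxn k n); rewrite leq_maxl; apply/eqP.
  exact: (iter_eq0_le (leqW (leq_maxr k n)) (iter_n_eq0 le_xn)).
case: (ex_minnP ex) => j /andP[le_kj /eqP fj0] j_min; exists j; split=> //.
move: le_kj; rewrite leq_eqVlt => /orP[/eqP <- // | ].
case: j fj0 j_min => // j _ j_min lt_kj; apply/negP => /eqP fj0.
by have := j_min j; rewrite -ltnS lt_kj fj0 eqxx ltnn => /(_ isT).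
Qed.

Lemma orbit_end_exists {x} : 0 < x <= n -> exists r, orbit_end f x r.
Proof.
case/andP=> x_gt0 le_xn; have [|j [_ fj_nz fj0]] := last_nonzero_iter 0 le_xn.
  by rewrite -lt0n.
by exists (iter j f x); split; [rewrite lt0n | | exists j].
Qed.

End Iterates.

Definition height_one (phi : nat -> nat) (n : nat) : {set 'I_n.+1} :=
  [set x : 'I_n.+1 | (0 < x) && (phin phi n x == 0)].

Section LocalFunction.

Variables (phi : nat -> nat) (n : nat).
Local Notation f := (phin phi n).

Lemma phin0 : f 0 = 0.
Proof. by []. Qed.

Lemma phin_le x : f x <= n.
Proof. by rewrite /phin; case: ifP => // /andP[_ /andP[]]. Qed.

Lemma phin_acyclic :
  (forall x, 0 < x -> phi x <> x) -> no_cycle phi n -> acyclic_on f n.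
Proof.
move=> phi_fixfree phi_nocycle [|[|m]] x // _ x_in; last exact: phi_nocycle.
rewrite /= /phin x_in /=; case: ifP => [_|_ x0]; last by rewrite -x0 in x_in.
by apply: phi_fixfree; case/andP: x_in.
Qed.

Lemma card_Dn : #|Dn n| = n.
Proof.
have -> : Dn n = [set~ ord0] by apply/setP => x; rewrite !inE lt0n.
by rewrite cardsC1 card_ord.
Qed.

Lemma mem_Jset k (x : 'I_n.+1) :
  (x \in Jset phi n k) = (0 < x) && (iter k f x != 0).
Proof.
by rewrite inE leq_ord (iter_le phin_le) ?leq_ord // -lt0n !andbT.
Qed.

Lemma card_Jset1 : #|Jset phi n 1| = n - #|height_one phi n|.
Proof.
rewrite -[X in _ = X - _]card_Dn -(cardsID (Jset phi n 1) (Dn n)).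
have -> : Dn n :&: Jset phi n 1 = Jset phi n 1.
  by apply/setIidPr/subsetP => x; rewrite mem_Jset inE => /andP[].
have -> : Dn n :\: Jset phi n 1 = height_one phi n.
  apply/setP => x; rewrite inE mem_Jset !inE.
  by case: (0 < x); rewrite //= andbT negbK.
by rewrite addnK.
Qed.

Lemma Jset_succ_sub k : Jset phi n k.+1 \subset Jset phi n k.
Proof.
apply/subsetP => x; rewrite !mem_Jset => /andP[-> /=].
by apply: contra => /eqP fk0; rewrite fk0.
Qed.

Hypothesis f_acyclic : acyclic_on f n.

Lemma exists_orbit_end {x : 'I_n.+1} : 0 < x -> exists r, orbit_end f x r.
Proof.
move=> x_gt0; apply: (orbit_end_exists phin0 phin_le f_acyclic).
by rewrite x_gt0 leq_ord.
Qed.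

Lemma Jset_succ_proper k :
  Jset phi n k.+1 != set0 -> Jset phi n k.+1 \proper Jset phi n k.
Proof.
case/set0Pn => x; rewrite mem_Jset => /andP[_ alive].
have [j [lt_kj fj_nz fj0]] :=
  last_nonzero_iter phin0 phin_le f_acyclic k.+1 (leq_ord x) alive.
pose z : 'I_n.+1 := inord (iter (j - k) f x).
have fkz : iter k f z = iter j f x.
  by rewrite inordK ?ltnS ?(iter_le phin_le) ?leq_ord // -iterD subnKC // ltnW.
have z_gt0 : 0 < z.
  by rewrite lt0n; apply: contra fj_nz => /eqP z0; rewrite -fkz z0 iter_fix0.
apply/properP; split; first exact: Jset_succ_sub.
by exists z; rewrite !mem_Jset ?iterS fkz ?z_gt0 ?fj_nz // -iterS fj0 eqxx.
Qed.

Lemma card_Jset k : #|Jset phi n k| <= n - k.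
Proof.
elim: k => [|k IH].
  rewrite subn0 -[X in _ <= X]card_Dn; apply/subset_leq_card/subsetP => x.
  by rewrite mem_Jset inE => /andP[].
have [->|nonempty] := eqVneq (Jset phi n k.+1) set0; first by rewrite cards0.
have lt_card := proper_card (Jset_succ_proper k nonempty).
rewrite subnS -ltnS (leq_trans lt_card) //.
exact: leq_trans IH (leqSpred _).
Qed.

Lemma mem_Omega (x y : 'I_n.+1) :
  y \in Omega phi n x <-> 0 < y /\ exists j, iter j f x = y.
Proof.
rewrite inE; split.
- case/existsP => j /andP[/eqP fjx /forallP alive]; split; last by exists j.
  by have := alive ord_max; rewrite /= fjx lt0n.
- case=> y_gt0 [j fjx].
  have lt_jn : j < n.+1.
    have fnx := iter_n_eq0 phin0 phin_le f_acyclic (leq_ord x).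
    rewrite ltnS leqNgt; apply: contraTN y_gt0 => lt_nj.
    by rewrite -fjx (iter_eq0_le phin0 (ltnW lt_nj) fnx).
  apply/existsP; exists (Ordinal lt_jn); rewrite /= fjx eqxx /=.
  apply/forallP => i; apply: contraTneq y_gt0 => fi0.
  by rewrite -fjx (iter_eq0_le phin0 (ltnSE (ltn_ord i)) fi0).
Qed.

Lemma orbit_rel_end {x y : 'I_n.+1} {r} :
  0 < y -> orbit_end f x r -> orbit_rel phi n x y <-> orbit_end f y r.
Proof.
move=> y_gt0 xr; rewrite /orbit_rel -setI_eq0; split.
- case/set0Pn => w; rewrite inE.
  case/andP=> /mem_Omega[w_gt0 [i wi]] /mem_Omega[_ [j wj]].
  have [r' wr'] := exists_orbit_end w_gt0.
  have xr' : orbit_end f x r' by apply: (orbit_end_iter i); rewrite wi.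
  by rewrite (orbit_end_uniq phin0 xr xr'); apply: (orbit_end_iter j); rewrite wj.
- move=> yr; apply/set0Pn; have r_le := orbit_end_le phin_le (leq_ord x) xr.
  exists (inord r); rewrite inE; apply/andP; split; apply/mem_Omega;
    rewrite inordK ?ltnS //; [case: xr | case: yr] => r_gt0 _ [j rj];
    by split => //; exists j.
Qed.

Lemma orbit_rel_equiv : {in Dn n & &, equivalence_rel (orbit_rel phi n)}.
Proof.
move=> x y z; rewrite !inE => x_gt0 y_gt0 z_gt0.
have [r xr] := exists_orbit_end x_gt0; have [s zs] := exists_orbit_end z_gt0.
split; first exact/(orbit_rel_end z_gt0 zs).
move=> /(orbit_rel_end y_gt0 xr) yr.
apply/idP/idP => [/(orbit_rel_end z_gt0 xr) | /(orbit_rel_end z_gt0 yr)] zr.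
- exact/(orbit_rel_end z_gt0 yr).
- exact/(orbit_rel_end z_gt0 xr).
Qed.

Lemma height_one_transversal :
  is_transversal (height_one phi n) (Dtilde phi n) (Dn n).
Proof.
apply/and3P; split; first exact: (equivalence_partitionP orbit_rel_equiv).
  by apply/subsetP => x; rewrite !inE => /andP[].
apply/forall_inP => B /imsetP[x]; rewrite inE => x_gt0 ->.
have [r xr] := exists_orbit_end x_gt0.
have [r_gt0 fr _] := xr.
pose r' : 'I_n.+1 := inord r.
have r'E : r' = r :> nat.
  by rewrite inordK // ltnS (orbit_end_le phin_le (leq_ord x) xr).
have r'_gt0 : 0 < r' by rewrite r'E.
apply/cards1P; exists r'; apply/setP => y; rewrite !inE.
apply/idP/eqP => [|->].
- case/andP=> /andP[y_gt0 /eqP fy0] /andP[_ /(orbit_rel_end y_gt0 xr) yr].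
  have yr' := orbit_end_self y_gt0 fy0.
  by apply/val_inj; rewrite /= r'E (orbit_end_uniq phin0 yr' yr).
- rewrite r'E r_gt0 fr eqxx; apply/(orbit_rel_end r'_gt0 xr).
  by rewrite r'E; apply: orbit_end_self.
Qed.

Lemma card_Dtilde : #|Dtilde phi n| = #|height_one phi n|.
Proof. exact/esym/card_transversal/height_one_transversal. Qed.

End LocalFunction.

(* phi 0 is never consulted by phi_n, and the bound also holds for k = 0. *)
Theorem proposition2p4 (phi : nat -> nat) (k n : nat) :
  phi 0 = 0 ->
  (forall x : nat, 0 < x -> phi x <> x) ->
  0 < k -> 0 < n ->
  no_cycle phi n ->
  #|Jset phi n k| <= n - k /\ #|Jset phi n 1| = n - #|Dtilde phi n|.
Proof.
move=> _ phi_fixfree _ _ phi_nocycle.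
have f_acyclic := phin_acyclic _ _ phi_fixfree phi_nocycle.
by rewrite card_Dtilde //; split; [exact: card_Jset | exact: card_Jset1].
Qed.
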